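(* Given $x_0\in[0,1]$, there is an infinite-dimensional vector subspace $S$ of $C^0([0,1])$ such that every $F$ in the closure of $S$ in $C([0,1])$ with respect to the supremum norm satisfies: (1) $F$ is a primitive of a Kurzweil integrable function, i.e. there is a Kurzweil integrable $f$ on $[0,1]$ with $F(x)-F(0)=\int_0^x f$ for all $x\in[0,1]$; and (2) $F$ is differentiable at every point of $[0,1]$ except possibly at $x_0$.
   Context: $C^0([0,1])$ denotes the set of everywhere differentiable real functions on $[0,1]$; $C([0,1])$ is the Banach space of continuous real functions on $[0,1]$ with the supremum norm. Kurzweil integral means the Henstock–Kurzweil integral. *)

From Stdlib Require Import Reals Lra.
Open Scope R_scope.

Fixpoint sumR (n : nat) (u : nat -> R) : R :=
  match n with
  | O => 0
  | S m => sumR m u + u m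
  end.

Definition in01 (x : R) : Prop := 0 <= x <= 1.

Definition diff_at01 (F : R -> R) (x : R) : Prop :=
  exists l : R, forall eps : R, eps > 0 -> exists d : R, d > 0 /\
    forall y : R, in01 y -> y <> x -> Rabs (y - x) < d ->
      Rabs ((F y - F x) / (y - x) - l) < eps.

Definition cont_at01 (F : R -> R) (x : R) : Prop :=
  forall eps : R, eps > 0 -> exists d : R, d > 0 /\
    forall y : R, in01 y -> Rabs (y - x) < d -> Rabs (F y - F x) < eps.

(* C^0([0,1]) in the paper's notation: everywhere differentiable on [0,1] *)
Definition everywhere_diff01 (F : R -> R) : Prop := forall x, in01 x -> diff_at01 F x.

Definition cont01 (F : R -> R) : Prop := forall x, in01 x -> cont_at01 F x.

Definition fine_tagged_partition (delta : R -> R) (a b : R)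
    (n : nat) (x t : nat -> R) : Prop :=
  x O = a /\ x n = b /\
  (forall i, (i < n)%nat ->
     x i < x (S i) /\ x i <= t i <= x (S i) /\
     t i - delta (t i) < x i /\ x (S i) < t i + delta (t i)).

Definition riemann_sum (f : R -> R) (n : nat) (x t : nat -> R) : R :=
  sumR n (fun i => f (t i) * (x (S i) - x i)).

Definition HK_integral (f : R -> R) (a b I : R) : Prop :=
  forall eps : R, eps > 0 ->
    exists delta : R -> R, (forall s, a <= s <= b -> delta s > 0) /\
      forall (n : nat) (x t : nat -> R),
        fine_tagged_partition delta a b n x t ->
        Rabs (riemann_sum f n x t - I) < eps.

Definition HK_integrable (f : R -> R) (a b : R) : Prop :=
  exists I, HK_integral f a b I.

(* vector subspace of functions (identified by their values on [0,1] only
   through the notions below) *)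
Definition is_subspace (S : (R -> R) -> Prop) : Prop :=
  S (fun _ => 0) /\
  (forall f g, S f -> S g -> S (fun y => f y + g y)) /\
  (forall (c : R) f, S f -> S (fun y => c * f y)).

Definition infinite_dim01 (S : (R -> R) -> Prop) : Prop :=
  forall n : nat, exists g : nat -> (R -> R),
    (forall i, (i < n)%nat -> S (g i)) /\
    forall c : nat -> R,
      (forall y, in01 y -> sumR n (fun i => c i * g i y) = 0) ->
      forall i, (i < n)%nat -> c i = 0.

Definition in_closure01 (S : (R -> R) -> Prop) (F : R -> R) : Prop :=
  cont01 F /\
  forall eps : R, eps > 0 -> exists G, S G /\
    forall y, in01 y -> Rabs (F y - G y) <= eps.

(* Let S be the span of dyadic dilates phi_k of a C^1 bump, placed on the longer side of
   x0 at distance about 2^-k from it, with pairwise disjoint supports accumulating only at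
   x0. A uniform limit F of elements of S coincides near each x <> x0 with F(p_k) phi_k,
   where p_k is the peak of the only phi_k alive there; hence F is differentiable off x0.
   A continuous function differentiable except at one point is the Henstock-Kurzweil
   primitive of its derivative: at the exceptional tag continuity makes the error of the
   Riemann sum small, and that tag serves at most two intervals of a partition. *)

From Stdlib Require Import Reals Lra Lia ClassicalEpsilon.
Open Scope R_scope.

Lemma sumR_ext n u v : (forall i, (i < n)%nat -> u i = v i) -> sumR n u = sumR n v.
Proof.
  induction n as [|n IH]; intros Huv; simpl; [reflexivity|].
  rewrite IH by (intros; apply Huv; lia). rewrite Huv by lia; reflexivity.
Qed.

Lemma sumR_plus n u v : sumR n (fun i => u i + v i) = sumR n u + sumR n v.
Proof. induction n as [|n IH]; simpl; [lra|]. rewrite IH; lra. Qed.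

Lemma sumR_minus n u v : sumR n (fun i => u i - v i) = sumR n u - sumR n v.
Proof. induction n as [|n IH]; simpl; [lra|]. rewrite IH; lra. Qed.

Lemma sumR_scal n c u : sumR n (fun i => c * u i) = c * sumR n u.
Proof. induction n as [|n IH]; simpl; [lra|]. rewrite IH; lra. Qed.

Lemma sumR_le n u v : (forall i, (i < n)%nat -> u i <= v i) -> sumR n u <= sumR n v.
Proof.
  induction n as [|n IH]; intros Huv; simpl; [lra|].
  assert (u n <= v n) by (apply Huv; lia).
  assert (sumR n u <= sumR n v) by (apply IH; intros; apply Huv; lia).
  lra.
Qed.

Lemma sumR_abs n u : Rabs (sumR n u) <= sumR n (fun i => Rabs (u i)).
Proof.
  induction n as [|n IH]; simpl; [rewrite Rabs_R0; lra|].
  eapply Rle_trans; [apply Rabs_triang|lra].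
Qed.

Lemma sumR_telescope n g : sumR n (fun i => g (S i) - g i) = g n - g O.
Proof. induction n as [|n IH]; simpl; [lra|]. rewrite IH; lra. Qed.

Lemma sumR_single n k (u : nat -> R) : (forall i, i <> k -> u i = 0) ->
  sumR n u = if Nat.ltb k n then u k else 0.
Proof.
  intros Hu; induction n as [|n IH]; simpl; [reflexivity|]. rewrite IH.
  destruct (Nat.eq_dec n k) as [->|Hnk].
  - rewrite (proj2 (Nat.ltb_ge k k)), (proj2 (Nat.ltb_lt k (S k))) by lia; ring.
  - rewrite (Hu n Hnk). destruct (Nat.ltb k n) eqn:E.
    + apply Nat.ltb_lt in E. rewrite (proj2 (Nat.ltb_lt k (S n))) by lia; ring.
    + apply Nat.ltb_ge in E. rewrite (proj2 (Nat.ltb_ge k (S n))) by lia; ring.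
Qed.

Lemma sumR_extend_by_zero n m (c w : nat -> R) :
  sumR n (fun i => c i * w i) =
  sumR (n + m) (fun i => (if Nat.ltb i n then c i else 0) * w i).
Proof.
  induction m as [|m IH].
  - rewrite Nat.add_0_r. apply sumR_ext. intros i Hi.
    rewrite (proj2 (Nat.ltb_lt i n)) by lia; reflexivity.
  - rewrite Nat.add_succ_r. simpl. rewrite <- IH.
    rewrite (proj2 (Nat.ltb_ge (n + m) n)) by lia; ring.
Qed.

Lemma fine_tagged_partition_mono delta a b n x t :
  fine_tagged_partition delta a b n x t -> forall i j, (i <= j <= n)%nat -> x i <= x j.
Proof.
  intros (_ & _ & Hx) i j. induction j as [|j IH]; intros Hij.
  - replace i with O by lia; lra.
  - destruct (Nat.eq_dec i (S j)) as [->|Hne]; [lra|].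
    assert (x i <= x j) by (apply IH; lia).
    destruct (Hx j ltac:(lia)) as [Hlt _]; lra.
Qed.

Definition indicator (c s : R) : R := if Req_dec_T s c then 1 else 0.

(* Consecutive intervals share only endpoints, so a tag [c] serves at most two of them. *)
Lemma fine_tagged_partition_tag_count delta a b n x t c :
  fine_tagged_partition delta a b n x t -> sumR n (fun i => indicator c (t i)) <= 2.
Proof.
  intros Hp. destruct Hp as (_ & _ & Hx).
  enough (Hm : forall m, (m <= n)%nat ->
    sumR m (fun i => indicator c (t i)) <= 2 /\
    (x m <= c -> sumR m (fun i => indicator c (t i)) <= 1) /\
    (x m < c -> sumR m (fun i => indicator c (t i)) <= 0)) by apply (Hm n), le_n.
  induction m as [|m IH]; intros Hmn; simpl; [lra|].
  destruct (IH ltac:(lia)) as (A & B & C).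
  destruct (Hx m ltac:(lia)) as (H1 & [H2 H3] & _).
  unfold indicator at 2 4 6. destruct (Req_dec_T (t m) c); subst; lra.
Qed.

Definition is_deriv01 (F : R -> R) (x l : R) : Prop :=
  forall eps : R, eps > 0 -> exists d : R, d > 0 /\
    forall y : R, in01 y -> y <> x -> Rabs (y - x) < d ->
      Rabs ((F y - F x) / (y - x) - l) < eps.

Lemma deriv01_choice (F : R -> R) :
  exists f : R -> R, forall x, diff_at01 F x -> is_deriv01 F x (f x).
Proof.
  apply (choice (fun x l => diff_at01 F x -> is_deriv01 F x l)). intros x.
  destruct (classic (diff_at01 F x)) as [[l Hl]|Hnd].
  - exists l; auto.
  - exists 0; contradiction.
Qed.

Lemma is_deriv01_of_locally_eq F H x d l : in01 x -> d > 0 ->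
  (forall y, in01 y -> Rabs (y - x) < d -> F y = H y) ->
  derivable_pt_lim H x l -> is_deriv01 F x l.
Proof.
  intros Hx Hd HFH HH eps Heps. destruct (HH eps Heps) as [del Hdel].
  exists (Rmin d del). split; [apply Rmin_glb_lt; [exact Hd|apply cond_pos]|].
  intros y Hy Hyx Hyd.
  pose proof (Rmin_l d del). pose proof (Rmin_r d del).
  rewrite (HFH y Hy), (HFH x Hx) by (rewrite ?Rminus_diag, ?Rabs_R0; lra).
  replace y with (x + (y - x)) at 1 by ring. apply Hdel; lra.
Qed.

Lemma is_deriv01_straddle F t l e : is_deriv01 F t l -> e > 0 ->
  exists d, d > 0 /\ forall u v, in01 u -> in01 v -> u <= t <= v -> t - d < u -> v < t + d ->
    Rabs (l * (v - u) - (F v - F u)) <= e * (v - u).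
Proof.
  intros Hl He. destruct (Hl e He) as (d & Hd & Hdq).
  exists d; split; [exact Hd|]. intros u v Hu Hv Htuv Hud Hvd.
  assert (Hlin : forall y, in01 y -> Rabs (y - t) < d ->
                 Rabs (F y - F t - l * (y - t)) <= e * Rabs (y - t)).
  { intros y Hy Hyd. destruct (Req_dec_T y t) as [->|Hyt].
    - replace (F t - F t - l * (t - t)) with 0 by ring.
      rewrite Rminus_diag, Rabs_R0; lra.
    - replace (F y - F t - l * (y - t)) with ((y - t) * ((F y - F t) / (y - t) - l))
        by (field; intro; apply Hyt; lra).
      rewrite Rabs_mult, Rmult_comm. apply Rmult_le_compat_r; [apply Rabs_pos|].
      left; apply Hdq; auto. }
  pose proof (Hlin v Hv ltac:(apply Rabs_def1; lra)) as Hvt.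
  pose proof (Hlin u Hu ltac:(apply Rabs_def1; lra)) as Hut.
  rewrite (Rabs_right (v - t)) in Hvt by lra. rewrite (Rabs_left1 (u - t)) in Hut by lra.
  replace (l * (v - u) - (F v - F u))
    with (- (F v - F t - l * (v - t)) + (F u - F t - l * (u - t))) by ring.
  eapply Rle_trans; [apply Rabs_triang|]. rewrite Rabs_Ropp. lra.
Qed.

Lemma cont_at01_straddle F c l e : cont_at01 F c -> e > 0 ->
  exists d, d > 0 /\ forall u v, in01 u -> in01 v -> u <= c <= v -> c - d < u -> v < c + d ->
    Rabs (l * (v - u) - (F v - F u)) <= e.
Proof.
  intros Hc He. destruct (Hc (e / 4) ltac:(lra)) as (d0 & Hd0 & Hcont).
  assert (Hl : 0 < Rabs l + 1) by (pose proof (Rabs_pos l); lra).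
  exists (Rmin d0 (e / 4 / (Rabs l + 1))). split.
  { apply Rmin_glb_lt; [lra|]. apply Rdiv_lt_0_compat; lra. }
  intros u v Hu Hv Hcuv Hud Hvd.
  pose proof (Rmin_l d0 (e / 4 / (Rabs l + 1))).
  pose proof (Rmin_r d0 (e / 4 / (Rabs l + 1))).
  assert (Hvc : Rabs (F v - F c) < e / 4) by (apply Hcont; auto; apply Rabs_def1; lra).
  assert (Huc : Rabs (F u - F c) < e / 4) by (apply Hcont; auto; apply Rabs_def1; lra).
  assert (Hlen : Rabs l * (v - u) <= e / 2).
  { assert (Hdl : (Rabs l + 1) * (e / 4 / (Rabs l + 1)) = e / 4) by (field; lra).
    pose proof (Rabs_pos l). nra. }
  replace (l * (v - u) - (F v - F u)) with (l * (v - u) - (F v - F c) + (F u - F c)) by ring.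
  eapply Rle_trans; [apply Rabs_triang|].
  eapply Rle_trans; [apply Rplus_le_compat_r, Rabs_triang|].
  rewrite Rabs_Ropp, Rabs_mult, (Rabs_right (v - u)) by lra. lra.
Qed.

Lemma riemann_sum_sub_telescope f F n x t :
  riemann_sum f n x t - (F (x n) - F (x O)) =
  sumR n (fun i => f (t i) * (x (S i) - x i) - (F (x (S i)) - F (x i))).
Proof. unfold riemann_sum. rewrite sumR_minus, (sumR_telescope n (fun i => F (x i))). reflexivity. Qed.

Theorem HK_integral_of_deriv_except_point F f c a b : 0 <= a -> b <= 1 -> cont_at01 F c ->
  (forall s, a <= s <= b -> s <> c -> is_deriv01 F s (f s)) ->
  HK_integral f a b (F b - F a).
Proof.
  intros Ha Hb Hc Hf eps Heps.
  assert (Hgauge : forall s, exists d, d > 0 /\ (a <= s <= b ->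
    forall u v, in01 u -> in01 v -> u <= s <= v -> s - d < u -> v < s + d ->
      Rabs (f s * (v - u) - (F v - F u)) <= eps / 2 * (v - u) + eps / 8 * indicator c s)).
  { intros s. unfold indicator. destruct (Req_dec_T s c) as [->|Hsc].
    - destruct (cont_at01_straddle F c (f c) (eps / 8) Hc ltac:(lra)) as (d & Hd & Hst).
      exists d. split; [exact Hd|]. intros _ u v Hu Hv Huv Hud Hvd.
      specialize (Hst u v Hu Hv Huv Hud Hvd). nra.
    - destruct (Rle_dec a s) as [Has|Has]; [destruct (Rle_dec s b) as [Hsb|Hsb]|].
      + destruct (is_deriv01_straddle F s (f s) (eps / 2) (Hf s (conj Has Hsb) Hsc)
          ltac:(lra)) as (d & Hd & Hst).
        exists d. split; [exact Hd|]. intros _ u v Hu Hv Huv Hud Hvd.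
        specialize (Hst u v Hu Hv Huv Hud Hvd). lra.
      + exists 1. split; [lra|]. intros; lra.
      + exists 1. split; [lra|]. intros; lra. }
  destruct (choice _ Hgauge) as [delta Hdelta].
  exists delta. split; [intros s _; apply Hdelta|].
  intros n x t Hp.
  pose proof Hp as (Hx0 & Hxn & Hx).
  assert (Hxab : forall i, (i <= n)%nat -> a <= x i <= b).
  { intros i Hi. rewrite <- Hx0, <- Hxn.
    split; apply (fine_tagged_partition_mono _ _ _ _ _ _ Hp); lia. }
  assert (Hterm : forall i, (i < n)%nat ->
    Rabs (f (t i) * (x (S i) - x i) - (F (x (S i)) - F (x i)))
      <= eps / 2 * (x (S i) - x i) + eps / 8 * indicator c (t i)).
  { intros i Hi. destruct (Hx i Hi) as (Hlt & Ht & Hl & Hr).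
    pose proof (Hxab i ltac:(lia)). pose proof (Hxab (S i) ltac:(lia)).
    apply (proj2 (Hdelta (t i))); unfold in01; auto; lra. }
  rewrite <- Hx0, <- Hxn, riemann_sum_sub_telescope.
  eapply Rle_lt_trans; [apply sumR_abs|].
  eapply Rle_lt_trans; [apply sumR_le, Hterm|].
  rewrite sumR_plus, !sumR_scal, (sumR_telescope n x).
  pose proof (fine_tagged_partition_tag_count _ _ _ _ _ _ c Hp).
  pose proof (Hxab n (le_n n)). pose proof (Hxab O ltac:(lia)). nra.
Qed.

Lemma HK_primitive_of_diff_except_point F c : in01 c -> cont01 F ->
  (forall x, in01 x -> x <> c -> diff_at01 F x) ->
  exists f, HK_integrable f 0 1 /\ forall x, 0 <= x <= 1 -> HK_integral f 0 x (F x - F 0).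
Proof.
  intros Hc HF Hd. destruct (deriv01_choice F) as [f Hf].
  assert (Hprim : forall x, 0 <= x <= 1 -> HK_integral f 0 x (F x - F 0)).
  { intros x Hx. apply HK_integral_of_deriv_except_point with c; try lra; [apply HF, Hc|].
    intros s Hs Hsc. apply Hf, Hd; [unfold in01; lra | exact Hsc]. }
  exists f. split; [exists (F 1 - F 0); apply Hprim; lra | exact Hprim].
Qed.

Definition span (phi : nat -> R -> R) (G : R -> R) : Prop :=
  exists n c, forall y, G y = sumR n (fun i => c i * phi i y).

Definition locally_single (phi : nat -> R -> R) (x : R) (k : nat) : Prop :=
  exists d, d > 0 /\ forall y, Rabs (y - x) < d -> forall j, j <> k -> phi j y = 0.

Section BumpFamily.

Variable phi : nat -> R -> R.
Variable p : nat -> R.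
Hypothesis p_in01 : forall k, in01 (p k).
Hypothesis phi_at_p : forall j k, phi j (p k) = if Nat.eqb j k then 1 else 0.
Hypothesis phi_derivable : forall k, derivable (phi k).

Lemma span_subspace : is_subspace (span phi).
Proof.
  split; [|split].
  - exists O, (fun _ => 0). reflexivity.
  - intros f g (n1 & c1 & Hf) (n2 & c2 & Hg).
    exists (n1 + n2)%nat,
      (fun i => (if Nat.ltb i n1 then c1 i else 0) + (if Nat.ltb i n2 then c2 i else 0)).
    intros y. rewrite Hf, Hg, (sumR_extend_by_zero n1 n2), (sumR_extend_by_zero n2 n1),
      (Nat.add_comm n2 n1), <- sumR_plus.
    apply sumR_ext; intros; ring.
  - intros a f (n & c & Hf). exists n, (fun i => a * c i). intros y.
    rewrite Hf, <- sumR_scal. apply sumR_ext; intros; ring.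
Qed.

Lemma span_eval_single G k : span phi G ->
  exists a, forall y, (forall j, j <> k -> phi j y = 0) -> G y = a * phi k y.
Proof.
  intros (n & c & HG). exists (if Nat.ltb k n then c k else 0). intros y Hy.
  rewrite HG, (sumR_single n k); [destruct (Nat.ltb k n); ring|].
  intros j Hj. rewrite Hy by exact Hj; ring.
Qed.

Lemma span_infinite_dim01 : infinite_dim01 (span phi).
Proof.
  intros n. exists phi. split.
  - intros i _. exists (S i), (fun j => if Nat.eqb j i then 1 else 0). intros y.
    rewrite (sumR_single (S i) i).
    + rewrite (proj2 (Nat.ltb_lt i (S i))), Nat.eqb_refl by lia; ring.
    + intros j Hj. rewrite (proj2 (Nat.eqb_neq j i)) by exact Hj; ring.
  - intros c Hc i Hi. specialize (Hc (p i) (p_in01 i)).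
    rewrite (sumR_single n i), (proj2 (Nat.ltb_lt i n)), phi_at_p, Nat.eqb_refl in Hc
      by (lia || (intros j Hj; rewrite phi_at_p, (proj2 (Nat.eqb_neq j i)) by exact Hj; ring)).
    lra.
Qed.

Lemma derivable_lin_comb n c : derivable (fun y => sumR n (fun i => c i * phi i y)).
Proof.
  induction n as [|n IH]; simpl; [apply derivable_const|].
  apply derivable_plus; [exact IH|apply derivable_scal, phi_derivable].
Qed.

Lemma span_everywhere_diff01 G : span phi G -> everywhere_diff01 G.
Proof.
  intros (n & c & HG) x Hx. destruct (derivable_lin_comb n c x) as [l Hl]. exists l.
  apply (is_deriv01_of_locally_eq G (fun y => sumR n (fun i => c i * phi i y)) x 1 l Hx);
    [lra| |exact Hl].
  intros y _ _; apply HG.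
Qed.

(* Where only [phi k] is nonzero every approximant is a multiple of [phi k], and evaluation
   at the peak [p k] identifies the multiple. *)
Lemma closure_eq_peak_mul F k y : in_closure01 (span phi) F -> in01 y ->
  (forall j, j <> k -> phi j y = 0) -> F y = F (p k) * phi k y.
Proof.
  intros [_ Happ] Hy Hsingle.
  assert (Hpk : forall j, j <> k -> phi j (p k) = 0).
  { intros j Hj. rewrite phi_at_p, (proj2 (Nat.eqb_neq j k)) by exact Hj; reflexivity. }
  set (C := 1 + Rabs (phi k y)).
  assert (HC : 0 < C) by (unfold C; pose proof (Rabs_pos (phi k y)); lra).
  enough (Rabs (F y - F (p k) * phi k y) <= 0).
  { apply Rminus_diag_uniq. destruct (Req_dec (F y - F (p k) * phi k y) 0) as [|Hne];
      [assumption|pose proof (Rabs_pos_lt _ Hne); lra]. }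
  apply Rle_plus_epsilon. intros eps Heps.
  destruct (Happ (eps / C) ltac:(apply Rdiv_lt_0_compat; lra)) as (G & HG & HGF).
  destruct (span_eval_single G k HG) as [a Ha].
  pose proof (HGF y Hy) as Hdy. pose proof (HGF (p k) (p_in01 k)) as Hdp.
  rewrite (Ha (p k) Hpk), phi_at_p, Nat.eqb_refl, Rmult_1_r in Hdp.
  rewrite (Ha y Hsingle) in Hdy.
  replace (F y - F (p k) * phi k y)
    with ((F y - a * phi k y) - (F (p k) - a) * phi k y) by ring.
  eapply Rle_trans; [apply Rabs_triang|]. rewrite Rabs_Ropp, Rabs_mult.
  assert (Hprod : Rabs (F (p k) - a) * Rabs (phi k y) <= eps / C * Rabs (phi k y))
    by (apply Rmult_le_compat_r; [apply Rabs_pos|exact Hdp]).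
  assert (Heq : eps / C + eps / C * Rabs (phi k y) = eps)
    by (unfold C in *; field; apply Rgt_not_eq; lra).
  lra.
Qed.

Lemma closure_diff_at01 F x k : in_closure01 (span phi) F -> in01 x ->
  locally_single phi x k -> diff_at01 F x.
Proof.
  intros HF Hx (d & Hd & Hsingle).
  destruct (phi_derivable k x) as [l Hl]. exists (F (p k) * l).
  apply (is_deriv01_of_locally_eq F (fun y => F (p k) * phi k y) x d); auto.
  - intros y Hy Hyx. apply closure_eq_peak_mul; auto.
  - apply derivable_pt_lim_scal, Hl.
Qed.

End BumpFamily.

Definition pos_sqr (u : R) : R := Rsqr (Rmax 0 u).

Lemma derivable_pt_lim_pos_sqr u : derivable_pt_lim pos_sqr u (2 * Rmax 0 u).
Proof.
  destruct (Rtotal_order u 0) as [Hneg|[->|Hpos]].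
  - rewrite Rmax_left by lra. replace (2 * 0) with 0 by ring.
    apply (derivable_pt_lim_locally_ext (fun _ => 0) _ u (u - 1) 0);
      [lra| |apply derivable_pt_lim_const].
    intros z Hz. unfold pos_sqr. rewrite Rmax_left by lra. unfold Rsqr; ring.
  - rewrite Rmax_left by lra. intros eps Heps. exists (mkposreal eps Heps).
    intros h Hh Hhe. simpl in Hhe. unfold pos_sqr.
    rewrite Rplus_0_l, (Rmax_left 0 0), Rsqr_0 by lra.
    assert (Hsq : Rabs (Rsqr (Rmax 0 h)) <= Rabs h * Rabs h).
    { rewrite <- Rabs_mult, !Rabs_right by (apply Rle_ge; (apply Rle_0_sqr || nra)).
      unfold Rmax, Rsqr. destruct (Rle_dec 0 h); nra. }
    replace ((Rsqr (Rmax 0 h) - 0) / h - 2 * 0) with (Rsqr (Rmax 0 h) / h)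
      by (field; exact Hh).
    unfold Rdiv. rewrite Rabs_mult, Rabs_inv.
    assert (0 < Rabs h) by (apply Rabs_pos_lt, Hh).
    apply Rle_lt_trans with (Rabs h); [|exact Hhe].
    apply Rmult_le_reg_r with (Rabs h); [lra|].
    rewrite Rmult_assoc, Rinv_l by lra. lra.
  - rewrite Rmax_right by lra.
    apply (derivable_pt_lim_locally_ext Rsqr _ u 0 (u + 1));
      [lra| |apply derivable_pt_lim_Rsqr].
    intros z Hz. unfold pos_sqr. rewrite Rmax_right by lra. reflexivity.
Qed.

Lemma derivable_pos_sqr : derivable pos_sqr.
Proof. intros u. exists (2 * Rmax 0 u). apply derivable_pt_lim_pos_sqr. Qed.

(* A C^1 bump supported in [5/8, 7/8] with maximum 1 at 3/4; since 7/8 < 2 * 5/8, the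
   supports of its dilates by distinct powers of 2 are disjoint. *)
Definition bump (v : R) : R := 4096 * pos_sqr ((v - 5/8) * (7/8 - v)).

Lemma bump_eq0 v : v <= 5/8 \/ 7/8 <= v -> bump v = 0.
Proof. intros Hv. unfold bump, pos_sqr. rewrite Rmax_left by nra. unfold Rsqr; ring. Qed.

Lemma bump_3_4 : bump (3/4) = 1.
Proof. unfold bump, pos_sqr. rewrite Rmax_right by lra. unfold Rsqr; field. Qed.

Lemma derivable_bump : derivable bump.
Proof.
  apply derivable_mult; [apply derivable_const|].
  apply (derivable_comp (fun v => (v - 5/8) * (7/8 - v)) pos_sqr); [|apply derivable_pos_sqr].
  apply derivable_mult.
  - apply derivable_minus; [apply derivable_id|apply derivable_const].
  - apply derivable_minus; [apply derivable_const|apply derivable_id].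
Qed.

(* The direction from [x0] into the longer half of [0,1], where the dyadic bumps are placed. *)
Definition dir (x0 : R) : R := if Rle_dec x0 (1/2) then 1 else -1.

Definition dyadic_bump (x0 : R) (k : nat) (y : R) : R :=
  bump (2 ^ S k * (dir x0 * (y - x0))).

Definition dyadic_peak (x0 : R) (k : nat) : R := x0 + dir x0 * (3/4 / 2 ^ S k).

Lemma dir_cases x0 : (dir x0 = 1 /\ x0 <= 1/2) \/ (dir x0 = -1 /\ 1/2 < x0).
Proof. unfold dir. destruct (Rle_dec x0 (1/2)); [left|right]; split; auto; lra. Qed.

Lemma dir_sqr x0 : dir x0 * dir x0 = 1.
Proof. destruct (dir_cases x0) as [[-> _]|[-> _]]; ring. Qed.

Lemma Rabs_dir_mult x0 a : Rabs (dir x0 * a) = Rabs a.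
Proof.
  rewrite Rabs_mult. destruct (dir_cases x0) as [[-> _]|[-> _]].
  - rewrite Rabs_R1; ring.
  - rewrite Rabs_left by lra; ring.
Qed.

Lemma in01_dir_shift x0 u : in01 x0 -> 0 <= u <= 1/2 -> in01 (x0 + dir x0 * u).
Proof. unfold in01. intros. destruct (dir_cases x0) as [[-> ?]|[-> ?]]; lra. Qed.

Lemma pow2_S_le j k : (j < k)%nat -> 2 * 2 ^ j <= 2 ^ k.
Proof. intros Hjk. change (2 * 2 ^ j) with (2 ^ S j). apply Rle_pow; [lra|lia]. Qed.

Lemma bump_dyadic_other k j w : 1/2 < 2 ^ S k * w < 9/8 -> j <> k -> bump (2 ^ S j * w) = 0.
Proof.
  intros [H1 H2] Hjk. apply bump_eq0.
  assert (Hw : 0 < w) by (pose proof (pow_lt 2 (S k) ltac:(lra)); nra).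
  destruct (Nat.lt_total j k) as [Hlt|[Heq|Hgt]]; [|lia|].
  - left. pose proof (pow2_S_le (S j) (S k) ltac:(lia)). nra.
  - right. pose proof (pow2_S_le (S k) (S j) ltac:(lia)). nra.
Qed.

Lemma dyadic_window u : 0 < u < 9/16 -> exists k, 1/2 < 2 ^ S k * u < 9/8.
Proof.
  intros Hu.
  assert (Hdown : forall n, 1/2 < 2 ^ S n * u -> exists k, 1/2 < 2 ^ S k * u < 9/8).
  { induction n as [|n IH]; intros Hn.
    - exists O. simpl in *. lra.
    - destruct (Rlt_le_dec (1/2) (2 ^ S n * u)) as [Hlt|Hle]; [exact (IH Hlt)|].
      exists (S n). split; [exact Hn|]. change (2 ^ S (S n)) with (2 * 2 ^ S n). lra. }
  destruct (INR_unbounded (1 / u)) as [n Hn]. apply (Hdown n).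
  assert (Hpow : INR n <= 2 ^ n).
  { clear. induction n as [|n IH]; [simpl; lra|]. rewrite S_INR. simpl.
    pose proof (pow_R1_Rle 2 n ltac:(lra)). lra. }
  assert (1 < INR n * u).
  { apply Rmult_lt_reg_r with (/ u); [apply Rinv_0_lt_compat; lra|].
    rewrite Rmult_assoc, Rinv_r by lra. unfold Rdiv in Hn. lra. }
  change (2 ^ S n) with (2 * 2 ^ n). nra.
Qed.

Lemma dyadic_bump_locally_single x0 x : in01 x -> x <> x0 ->
  exists k, locally_single (dyadic_bump x0) x k.
Proof.
  intros Hx Hne. set (u := dir x0 * (x - x0)).
  assert (Hdist : forall y, Rabs (dir x0 * (y - x0) - u) = Rabs (y - x)).
  { intros y. rewrite <- (Rabs_dir_mult x0 (y - x)). f_equal. unfold u; ring. }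
  assert (Hu0 : u <> 0).
  { unfold u. destruct (dir_cases x0) as [[-> _]|[-> _]]; intro; apply Hne; lra. }
  destruct (Rlt_le_dec u 0) as [Hneg|Hpos].
  { exists O, (- u). split; [lra|]. intros y Hy j _. apply bump_eq0. left.
    rewrite <- Hdist in Hy. apply Rabs_def2 in Hy.
    pose proof (pow_lt 2 (S j) ltac:(lra)). nra. }
  destruct (Rlt_le_dec (7/16) u) as [Hbig|Hsmall].
  { exists O, (u - 7/16). split; [lra|]. intros y Hy j _. apply bump_eq0. right.
    rewrite <- Hdist in Hy. apply Rabs_def2 in Hy.
    pose proof (pow_R1_Rle 2 j ltac:(lra)). change (2 ^ S j) with (2 * 2 ^ j). nra. }
  destruct (dyadic_window u ltac:(lra)) as [k Hk].
  pose proof (pow_lt 2 (S k) ltac:(lra)) as Hp.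
  pose proof (Rmin_l (2 ^ S k * u - 1/2) (9/8 - 2 ^ S k * u)).
  pose proof (Rmin_r (2 ^ S k * u - 1/2) (9/8 - 2 ^ S k * u)).
  set (m := Rmin (2 ^ S k * u - 1/2) (9/8 - 2 ^ S k * u)) in *.
  assert (Hm : 0 < m) by (apply Rmin_glb_lt; lra).
  exists k, (m / 2 ^ S k). split; [apply Rdiv_lt_0_compat; lra|].
  intros y Hy j Hj. apply (bump_dyadic_other k); [|exact Hj].
  rewrite <- Hdist in Hy. apply Rabs_def2 in Hy.
  assert (E : 2 ^ S k * (m / 2 ^ S k) = m) by (field; lra).
  set (w := dir x0 * (y - x0)) in *. set (d := m / 2 ^ S k) in *.
  split; nra.
Qed.

Lemma dyadic_peak_in01 x0 k : in01 x0 -> in01 (dyadic_peak x0 k).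
Proof.
  intros Hx0. apply in01_dir_shift; [exact Hx0|].
  pose proof (pow_R1_Rle 2 k ltac:(lra)). change (2 ^ S k) with (2 * 2 ^ k).
  split; [apply Rlt_le, Rdiv_lt_0_compat; lra|].
  apply Rmult_le_reg_r with (2 * 2 ^ k); [lra|].
  unfold Rdiv. rewrite Rmult_assoc, Rinv_l by lra. lra.
Qed.

Lemma dyadic_bump_at_peak x0 j k :
  dyadic_bump x0 j (dyadic_peak x0 k) = if Nat.eqb j k then 1 else 0.
Proof.
  unfold dyadic_bump, dyadic_peak.
  replace (dir x0 * (x0 + dir x0 * (3/4 / 2 ^ S k) - x0))
    with (dir x0 * dir x0 * (3/4 / 2 ^ S k)) by ring.
  rewrite dir_sqr, Rmult_1_l.
  pose proof (pow_lt 2 (S k) ltac:(lra)).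
  destruct (Nat.eqb_spec j k) as [->|Hjk].
  - replace (2 ^ S k * (3/4 / 2 ^ S k)) with (3/4) by (field; lra). apply bump_3_4.
  - apply (bump_dyadic_other k); [|exact Hjk].
    replace (2 ^ S k * (3/4 / 2 ^ S k)) with (3/4) by (field; lra). lra.
Qed.

Lemma derivable_dyadic_bump x0 k : derivable (dyadic_bump x0 k).
Proof.
  apply (derivable_comp (fun y => 2 ^ S k * (dir x0 * (y - x0))) bump);
    [|apply derivable_bump].
  apply derivable_scal, derivable_scal, derivable_minus;
    [apply derivable_id|apply derivable_const].
Qed.

Theorem mainTheorem12 (x0 : R) (Hx0 : 0 <= x0 <= 1) :
  exists S : (R -> R) -> Prop,
    is_subspace S /\ infinite_dim01 S /\
    (forall G, S G -> everywhere_diff01 G) /\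
    (forall F, in_closure01 S F ->
       (exists f : R -> R, HK_integrable f 0 1 /\
          forall x, 0 <= x <= 1 -> HK_integral f 0 x (F x - F 0)) /\
       (forall x, 0 <= x <= 1 -> x <> x0 -> diff_at01 F x)).
Proof.
  pose proof (fun k => dyadic_peak_in01 x0 k Hx0) as Hpeak.
  exists (span (dyadic_bump x0)). split; [|split; [|split]].
  - apply span_subspace.
  - apply (span_infinite_dim01 _ (dyadic_peak x0)); [exact Hpeak|].
    apply dyadic_bump_at_peak.
  - apply span_everywhere_diff01, derivable_dyadic_bump.
  - intros F HF.
    assert (Hdiff : forall x, 0 <= x <= 1 -> x <> x0 -> diff_at01 F x).
    { intros x Hx Hne. destruct (dyadic_bump_locally_single x0 x Hx Hne) as [k Hk].
      apply (closure_diff_at01 _ (dyadic_peak x0) Hpeak (dyadic_bump_at_peak x0)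
               (derivable_dyadic_bump x0) F x k HF Hx Hk). }
    split; [|exact Hdiff].
    apply (HK_primitive_of_diff_except_point F x0 Hx0 (proj1 HF) Hdiff).
Qed.
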